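(* Let $G$ be a graph on $d+2$ vertices that is representable in $\mathbb{R}^d$ with ratio $k$. Then $G$ has a spherical representation in $\mathbb{R}^d$ with ratio $k$ if and only if both of the following hold: (3) $\det(xJ + B_G(k))$ is the zero polynomial in $x$; (4) there exists $r_0 \in \mathbb{R}$ such that $rJ + B_G(k)$ is positive semidefinite for all $r \geq r_0$.
   Context: Graphs are finite and simple with vertices labeled $1,\dots,d+2$. A finite set $S\subset\mathbb{R}^d$ is a 2-distance set if $\{\|p-q\| : p,q\in S, p\neq q\}$ has exactly two elements $\alpha_1>\alpha_2$; its distance ratio is $k=\alpha_1/\alpha_2$; its associated graph has vertex set $S$ with $p,q$ adjacent iff $\|p-q\|=\alpha_1$. $G$ is representable in $\mathbb{R}^d$ with ratio $k$ if some 2-distance set in $\mathbb{R}^d$ with ratio $k$ has associated graph $G$; it has a spherical representation with ratio $k$ if such a set can be chosen on a $(d-1)$-dimensional sphere in $\mathbb{R}^d$. $B_G(k)$ is the $(d+2)\times(d+2)$ matrix with $b_{ii}=0$, $b_{ij}=-1$ for non-adjacent $i\neq j$, $b_{ij}=-k^2$ for adjacent $i,j$. $J$ is the all-ones matrix. *)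

From HB Require Import structures.
From mathcomp Require Import all_boot all_order all_algebra.
From mathcomp Require Import reals.
Set Implicit Arguments. Unset Strict Implicit. Unset Printing Implicit Defensive.
Import Order.TTheory GRing.Theory Num.Theory.
Local Open Scope ring_scope.

(* Vertices 1..d+2 are 'I_(d.+2); points of R^d are row vectors 'rV[R]_d. *)

Definition edist (R : realType) (d : nat) (p q : 'rV[R]_d) : R :=
  Num.sqrt (\sum_(t < d) (p ord0 t - q ord0 t) ^+ 2).

Definition simple_graph (n : nat) (G : rel 'I_n) : Prop :=
  (forall i j, G i j = G j i) /\ (forall i, ~~ G i i).

(* The labelled family of points p (with p injective, so that its image
   S has exactly n points) is a 2-distance set with distances a1 > a2,
   its distance ratio is k = a1/a2 and its associated graph is G
   (vertex i <-> point p i). *)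
Definition two_distance_rep (R : realType) (d n : nat) (G : rel 'I_n) (k : R)
    (p : 'I_n -> 'rV[R]_d) : Prop :=
  injective p /\
  exists a1 a2 : R,
    [/\ a2 < a1,
        (forall x : R, (exists i j, i != j /\ x = edist (p i) (p j)) <->
                       (x = a1 \/ x = a2)),
        k = a1 / a2 &
        (forall i j, i != j -> (G i j <-> edist (p i) (p j) = a1))].

Definition representable (R : realType) (d : nat) (G : rel 'I_(d.+2)) (k : R) : Prop :=
  exists p : 'I_(d.+2) -> 'rV[R]_d, two_distance_rep G k p.

Definition spherical_representable (R : realType) (d : nat) (G : rel 'I_(d.+2)) (k : R) : Prop :=
  exists p : 'I_(d.+2) -> 'rV[R]_d,
    two_distance_rep G k p /\
    exists (c : 'rV[R]_d) (rho : R), 0 < rho /\ forall i, edist (p i) c = rho.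

Definition BG (R : realType) (n : nat) (G : rel 'I_n) (k : R) : 'M[R]_n :=
  \matrix_(i, j) (if i == j then 0 else if G i j then - k ^+ 2 else -1).

Definition Jmx (R : realType) (n : nat) : 'M[R]_n := const_mx 1.

Definition psd (R : realType) (n : nat) (A : 'M[R]_n) : Prop :=
  A^T = A /\ forall v : 'cV[R]_n, 0 <= (v^T *m A *m v) ord0 ord0.

From HB Require Import structures.
From mathcomp Require Import all_boot all_order all_algebra.
From mathcomp Require Import reals.
From mathcomp Require Import ring lra.
Set Implicit Arguments. Unset Strict Implicit. Unset Printing Implicit Defensive.
Import Order.TTheory GRing.Theory Num.Theory.
Local Open Scope ring_scope.

(* Let D be the matrix of squared distances of a two-distance set p_1, ..., p_(d+2)
   with smaller distance alpha_2; then B_G(k) = -a D with a = alpha_2^-2, and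
   D = q 1^T + 1 q^T - 2 P P^T, where P is the coordinate matrix and q_i = |p_i|^2.
   If the points lie on a sphere, centred at the origin after translation, then
   q = rho^2 1, so r J + B_G(k) = (r - 2 a rho^2) J + 2 a P P^T is positive
   semidefinite for large r; and a nonzero v with v^T [P 1] = 0, which exists
   because [P 1] has d+2 rows and d+1 columns, kills both J and B_G(k), so
   det(x J + B_G(k)) vanishes identically.
   Conversely, if r J + B_G(k) is positive semidefinite and P^T v = 0, 1^T v = 0,
   then v^T (r J + B_G(k)) v = 0, hence (r J + B_G(k)) v = -a (q^T v) 1 = 0. So q
   lies in the column space of [P 1], i.e. |p_i|^2 = w.p_i + t for all i, and the
   points lie on the sphere centred at w/2. *)

Lemma quadratic_ge0_lincoef_eq0 (R : realFieldType) (a b : R) :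
  (forall t, 0 <= 2 * t * a + t ^+ 2 * b) -> a = 0.
Proof.
move=> ge0; have b_ge0 : 0 <= b by have := ge0 1; have := ge0 (-1); lra.
have b1_gt0 : 0 < b + 1 by lra.
(* at t = -a/(b+1) the quadratic equals -a^2 (b+2) / (b+1)^2 *)
pose t := - a / (b + 1).
have ta : a = - (t * (b + 1)) by rewrite /t divfK ?opprK // gt_eqF.
have := ge0 t; rewrite ta => ge0t.
have : t ^+ 2 * (b + 2) <= 0 by nra.
have -> : t = 0 by nra.
by rewrite mul0r oppr0.
Qed.

Lemma submx_of_ker (F : fieldType) m n p (A : 'M[F]_(m, n)) (B : 'M[F]_(p, n)) :
  (forall v : 'cV[F]_n, A *m v = 0 -> B *m v = 0) -> (B <= A)%MS.
Proof.
move=> AB; rewrite submxE; apply/eqP/matrixP => i j.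
have /AB/(congr1 (fun v : 'cV_p => v i 0)) : A *m col j (cokermx A) = 0.
  by rewrite colE mulmxA mulmx_coker mul0mx.
by rewrite colE mulmxA -colE !mxE.
Qed.

Lemma trmx_mul_self_sum (R : pzSemiRingType) m (v : 'cV[R]_m) :
  (v^T *m v) 0 0 = \sum_i v i 0 ^+ 2.
Proof. by rewrite !mxE; apply: eq_bigr => i _; rewrite mxE. Qed.

Lemma trmx_mul_self_ge0 (R : realDomainType) m (v : 'cV[R]_m) : 0 <= (v^T *m v) 0 0.
Proof. by rewrite trmx_mul_self_sum sumr_ge0 // => i _; rewrite sqr_ge0. Qed.

Lemma trmx_mul_self_eq0 (R : realDomainType) m (v : 'cV[R]_m) :
  (v^T *m v) 0 0 = 0 -> v = 0.
Proof.
rewrite trmx_mul_self_sum => /(psumr_eq0P (fun i _ => sqr_ge0 (v i 0))) vv0.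
by apply/matrixP => i j; rewrite (ord1 j) mxE; apply/eqP; rewrite -sqrf_eq0 vv0.
Qed.

Section Psd.
Variable R : realType.

Lemma psd_gram n m (U : 'M[R]_(n, m)) : psd (U *m U^T).
Proof.
split=> [|v]; first by rewrite trmx_mul trmxK.
by rewrite mulmxA -mulmxA -[v^T *m U]trmxK trmx_mul trmxK trmx_mul_self_ge0.
Qed.

Lemma psd_lincomb n (A B : 'M[R]_n) a b :
  0 <= a -> 0 <= b -> psd A -> psd B -> psd (a *: A + b *: B).
Proof.
move=> a_ge0 b_ge0 [symA A_ge0] [symB B_ge0].
split=> [|v]; first by rewrite linearD !linearZ /= symA symB.
have := addr_ge0 (mulr_ge0 a_ge0 (A_ge0 v)) (mulr_ge0 b_ge0 (B_ge0 v)).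
by rewrite mulmxDr mulmxDl -!scalemxAr -!scalemxAl !mxE.
Qed.

Lemma psd_form_eq0 n (A : 'M[R]_n) (v : 'cV[R]_n) :
  psd A -> (v^T *m A *m v) 0 0 = 0 -> A *m v = 0.
Proof.
move=> [symA A_ge0] vAv0.
have uAv0 (u : 'cV[R]_n) : (u^T *m A *m v) 0 0 = 0.
  apply: (@quadratic_ge0_lincoef_eq0 _ _ ((u^T *m A *m u) 0 0)) => t.
  have vAu : (v^T *m A *m u) 0 0 = (u^T *m A *m v) 0 0.
    by rewrite -(trmxK (v^T *m A *m u)) mxE !trmx_mul !trmxK symA mulmxA.
  have := A_ge0 (v + t *: u).
  rewrite [(v + _)^T]linearD [X in v^T + X]linearZ /=.
  rewrite mulmxDl mulmxDr !mulmxDl -!scalemxAl -!scalemxAr.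
  move: vAv0 vAu; move: (v^T *m A *m v) (v^T *m A *m u) (u^T *m A *m v) (u^T *m A *m u).
  by move=> vv vu uv uu vv0 vuE; rewrite !mxE vv0 vuE; lra.
apply: trmx_mul_self_eq0; rewrite -[RHS](uAv0 (A *m v)).
by rewrite trmx_mul symA mulmxA.
Qed.

End Psd.

Lemma det_XJ_add_eq0 (F : fieldType) n (B : 'M[F]_n) (v : 'rV[F]_n) :
  v != 0 -> v *m B = 0 -> v *m (const_mx 1 : 'M[F]_n) = 0 ->
  \det (const_mx 'X + map_mx polyC B) = 0.
Proof.
move=> v_neq0 vB vJ; apply/eqP/det0P; exists (map_mx polyC v).
  by rewrite map_mx_eq0.
have -> : const_mx 'X = 'X *: map_mx polyC (const_mx 1 : 'M[F]_n).
  by apply/matrixP => i j; rewrite !mxE polyC1 mulr1.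
by rewrite mulmxDr -scalemxAr -!map_mxM vJ vB map_mx0 scaler0 addr0.
Qed.

Lemma lker_neq0 (F : fieldType) m n (A : 'M[F]_(m, n)) :
  (n < m)%N -> exists2 v : 'rV[F]_m, v != 0 & v *m A = 0.
Proof.
move=> lt_nm; have : kermx A != 0.
  by rewrite kermx_eq0 /row_free ltn_eqF // (leq_ltn_trans (rank_leq_col A)).
by case/rowV0Pn => v /sub_kermxP vA v_neq0; exists v.
Qed.

Definition ones (R : pzSemiRingType) n : 'cV[R]_n := const_mx 1.

Lemma Jmx_ones (R : realType) n : Jmx R n = ones R n *m (ones R n)^T.
Proof. by apply/matrixP => i j; rewrite !mxE big_ord1 !mxE mulr1. Qed.

Section PointConfiguration.
Variables (R : realType) (d : nat).

Lemma edist_sqr (x y : 'rV[R]_d) : edist x y ^+ 2 = \sum_t (x 0 t - y 0 t) ^+ 2.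
Proof. by rewrite sqr_sqrtr // sumr_ge0 // => t _; rewrite sqr_ge0. Qed.

Lemma edist_eq0 (x y : 'rV[R]_d) : edist x y = 0 -> x = y.
Proof.
move=> /(congr1 (fun r => r ^+ 2)); rewrite edist_sqr expr0n /=.
move=> /(psumr_eq0P (fun t _ => sqr_ge0 (x 0 t - y 0 t))) xy0.
apply/matrixP => i t; rewrite (ord1 i); apply/eqP.
by rewrite -subr_eq0 -sqrf_eq0 xy0.
Qed.

Lemma edist_subr (x y c : 'rV[R]_d) : edist (x - c) (y - c) = edist x y.
Proof.
rewrite /edist; congr Num.sqrt; apply: eq_bigr => t _.
by rewrite !mxE opprD addrACA subrr addr0.
Qed.

Variables (n : nat) (p : 'I_n -> 'rV[R]_d).

Definition coordmx : 'M[R]_(n, d) := \matrix_(i, t) p i 0 t.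
Definition sqnorms : 'cV[R]_n := \col_i \sum_t p i 0 t ^+ 2.
Definition sqdistmx : 'M[R]_n := \matrix_(i, j) edist (p i) (p j) ^+ 2.

Lemma sqdistmxE :
  sqdistmx = sqnorms *m (ones R n)^T + ones R n *m sqnorms^T
             - 2%:R *: (coordmx *m coordmx^T).
Proof.
apply/matrixP => i j; rewrite !mxE !big_ord1 !mxE edist_sqr mulr1 mul1r.
rewrite mulr_sumr -big_split -sumrB /=; apply: eq_bigr => t _; rewrite !mxE; ring.
Qed.

End PointConfiguration.

Section TwoDistanceSets.
Variables (R : realType) (d n : nat).
Implicit Types (p : 'I_n -> 'rV[R]_d) (c : 'rV[R]_d) (rho : R).

Lemma sqdistmx_sphere p c rho : (forall i, edist (p i) c = rho) ->
  let U := coordmx (fun i => p i - c) in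
  sqdistmx p = (rho ^+ 2 *+ 2) *: Jmx R n - 2%:R *: (U *m U^T).
Proof.
move=> pc U.
have -> : sqdistmx p = sqdistmx (fun i => p i - c).
  by apply/matrixP => i j; rewrite !mxE edist_subr.
have sqnormsU : sqnorms (fun i => p i - c) = rho ^+ 2 *: ones R n.
  apply/matrixP => i j; rewrite !mxE -(pc i) edist_sqr mulr1.
  by apply: eq_bigr => t _; rewrite !mxE.
rewrite sqdistmxE sqnormsU; apply/matrixP => i j; rewrite !mxE !big_ord1 !mxE; ring.
Qed.

Lemma two_distance_rep_BG (G : rel 'I_n) k p : two_distance_rep G k p ->
  exists2 a : R, 0 < a & BG G k = - a *: sqdistmx p.
Proof.
move=> [p_inj [a1 [a2 [a21 dists kE adj]]]].
have a2_gt0 : 0 < a2.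
  have [i [j [ij ->]]] : exists i j, i != j /\ a2 = edist (p i) (p j).
    by apply/dists; right.
  rewrite lt_neqAle sqrtr_ge0 andbT eq_sym; apply: contra ij.
  by move=> /eqP/edist_eq0/p_inj ->.
have a2_neq0 : a2 != 0 by rewrite gt_eqF.
exists (a2 ^- 2); first by rewrite invr_gt0 exprn_gt0.
apply/matrixP => i j; rewrite !mxE; have [->|ij] := eqVneq i j.
  by rewrite edist_sqr big1 ?mulr0 // => t _; rewrite subrr expr0n.
have : edist (p i) (p j) = a1 \/ edist (p i) (p j) = a2.
  by apply/dists; exists i, j.
case=> e.
  have -> : G i j by apply/(adj i j ij).
  by rewrite e kE; field.
have -> : G i j = false.
  apply/negbTE/negP => /(adj i j ij) a2a1.
  by move: a21; rewrite -e a2a1 ltxx.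
by rewrite e; field.
Qed.

Lemma sphere_psd_BG (G : rel 'I_n) k p c rho :
  two_distance_rep G k p -> (forall i, edist (p i) c = rho) ->
  exists r0 : R, forall r, r0 <= r -> psd (r *: Jmx R n + BG G k).
Proof.
move=> /two_distance_rep_BG [a a_gt0 ->] /sqdistmx_sphere ->.
set U := coordmx _; exists (a * rho ^+ 2 *+ 2) => r r_ge.
have -> : r *: Jmx R n + - a *: ((rho ^+ 2 *+ 2) *: Jmx R n - 2%:R *: (U *m U^T)) =
          (r - a * rho ^+ 2 *+ 2) *: Jmx R n + (a *+ 2) *: (U *m U^T).
  by apply/matrixP => i j; rewrite !mxE; ring.
rewrite Jmx_ones; apply: psd_lincomb; try exact: psd_gram.
  by rewrite subr_ge0.
by rewrite mulrn_wge0 ?ltW.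
Qed.

Lemma sphere_det_BG (G : rel 'I_n) k p c rho : (d.+1 < n)%N ->
  two_distance_rep G k p -> (forall i, edist (p i) c = rho) ->
  \det (const_mx 'X + map_mx polyC (BG G k)) = 0.
Proof.
move=> lt_dn /two_distance_rep_BG [a _ ->] /sqdistmx_sphere ->.
set U := coordmx _.
have [|v v_neq0 /eqP] := lker_neq0 (row_mx U (ones R n)); first by rewrite addn1.
rewrite mul_mx_row row_mx_eq0 => /andP[/eqP vU /eqP v1].
have vJ : v *m Jmx R n = 0 by rewrite Jmx_ones mulmxA v1 mul0mx.
apply: (det_XJ_add_eq0 v_neq0 _ vJ).
rewrite -scalemxAr mulmxBr -!scalemxAr vJ mulmxA vU mul0mx.
by rewrite !scaler0 subr0 scaler0.
Qed.

Lemma psd_BG_sqnorms_ker (G : rel 'I_n) k p r : (0 < n)%N ->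
  two_distance_rep G k p -> psd (r *: Jmx R n + BG G k) ->
  forall v : 'cV[R]_n,
    (row_mx (coordmx p) (ones R n))^T *m v = 0 -> (sqnorms p)^T *m v = 0.
Proof.
move=> n_gt0 /two_distance_rep_BG [a a_gt0 ->] psdM v.
rewrite tr_row_mx mul_col_mx => /eqP; rewrite col_mx_eq0 => /andP[/eqP Pv /eqP onev].
set x := (sqnorms p)^T *m v.
have Dv : sqdistmx p *m v = ones R n *m x.
  rewrite sqdistmxE mulmxBl mulmxDl -scalemxAl -!mulmxA onev Pv !mulmx0.
  by rewrite scaler0 add0r subr0.
have Mv : (r *: Jmx R n + - a *: sqdistmx p) *m v = - a *: (ones R n *m x).
  by rewrite mulmxDl -!scalemxAl Dv Jmx_ones -mulmxA onev mulmx0 scaler0 add0r.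
have vT1 : v^T *m ones R n = 0 by rewrite -[v^T *m _]trmxK trmx_mul trmxK onev trmx0.
have := @psd_form_eq0 _ _ _ v psdM.
rewrite -mulmxA Mv -scalemxAr mulmxA vT1 mul0mx scaler0 mxE => /(_ erefl) /eqP.
rewrite scalemx_eq0 oppr_eq0 gt_eqF //= => /eqP onex0.
apply/matrixP => i j; rewrite (ord1 i) (ord1 j).
have := congr1 (fun M : 'cV_n => M (Ordinal n_gt0) 0) onex0.
by rewrite !mxE big_ord1 !mxE mul1r.
Qed.

Lemma sphere_of_sqnorms_sub p :
  ((sqnorms p)^T <= (row_mx (coordmx p) (ones R n))^T)%MS ->
  exists c rho, forall i, edist (p i) c = rho.
Proof.
case/submxP => x; rewrite -(hsubmxK x) tr_row_mx mul_row_col.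
set w := lsubmx x; set t := rsubmx x 0 0 => sqnormsE.
have affine i : \sum_s p i 0 s ^+ 2 = \sum_s w 0 s * p i 0 s + t.
  have := congr1 (fun M : 'rV_n => M 0 i) sqnormsE.
  rewrite !mxE big_ord1 !mxE mulr1 => ->; congr (_ + _); last by rewrite /t mxE.
  by apply: eq_bigr => s _; rewrite !mxE.
pose c : 'rV[R]_d := 2^-1 *: w.
exists c, (Num.sqrt (t + \sum_s c 0 s ^+ 2)) => i; rewrite /edist; congr Num.sqrt.
have -> : \sum_s (p i 0 s - c 0 s) ^+ 2 =
          \sum_s p i 0 s ^+ 2 - \sum_s w 0 s * p i 0 s + \sum_s c 0 s ^+ 2.
  by rewrite -sumrB -big_split /=; apply: eq_bigr => s _; rewrite /c mxE; field.
by rewrite affine; ring.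
Qed.

Lemma equidistant_radius_gt0 p c rho (i j : 'I_n) :
  i != j -> injective p -> (forall i, edist (p i) c = rho) -> 0 < rho.
Proof.
move=> ij p_inj pc; rewrite -(pc i) lt_neqAle sqrtr_ge0 andbT eq_sym.
apply: contra ij => /eqP /[dup] /edist_eq0 pic; rewrite pc -(pc j) => /edist_eq0 pjc.
by apply/eqP/p_inj; rewrite pic pjc.
Qed.

Lemma psd_BG_sphere (G : rel 'I_n) k p r : (1 < n)%N ->
  two_distance_rep G k p -> psd (r *: Jmx R n + BG G k) ->
  exists c rho, 0 < rho /\ forall i, edist (p i) c = rho.
Proof.
move=> n_gt1 rep psdM; have n_gt0 := ltnW n_gt1.
have [c [rho pc]] :=
  sphere_of_sqnorms_sub (submx_of_ker (psd_BG_sqnorms_ker n_gt0 rep psdM)).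
exists c, rho; split=> //; have [p_inj _] := rep.
by apply: (@equidistant_radius_gt0 p c rho (Ordinal n_gt0) (Ordinal n_gt1)).
Qed.

End TwoDistanceSets.

Theorem lemma3p4 (R : realType) (d : nat) (G : rel 'I_(d.+2)) (k : R) :
  simple_graph G ->
  representable G k ->
  (spherical_representable G k <->
     (\det (const_mx 'X + map_mx polyC (BG G k)) = 0 :> {poly R} /\
      exists r0 : R, forall r : R, r0 <= r -> psd (r *: Jmx R (d.+2) + BG G k))).
Proof.
move=> _ [p rep]; split.
  move=> [q [repq [c [rho [_ qc]]]]]; split; first exact: sphere_det_BG repq qc.
  exact: sphere_psd_BG repq qc.
move=> [_ [r0 psd_r0]]; exists p; split=> //.
exact: psd_BG_sphere rep (psd_r0 r0 (lexx r0)).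
Qed.
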